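(* Let $G$ be a finitely generated group and $S$ a finite generating set. Then the Cayley graph $Cay(G,S)$ (equivalently $G$) is quasi-isometric to a tree if and only if there exist $i_0,k,m\in\mathbb{N}$ such that $G$ is $(i_0,k,m)$-chordal with respect to $S$.
   Context: $S^{\pm1}=S\cup S^{-1}\setminus\{e\}$; $Cay(G,S)$ has vertex set $G$, edges $\{g,gs\}$ ($s\in S^{\pm1}$), each edge of length 1. A relation $s_1\cdots s_n=e$ with $n>2$, $s_i\in S^{\pm1}$, is simple if $s_p\cdots s_q=e$ holds exactly when $(p,q)=(1,n)$. $G$ is $(i_0,k,m)$-chordal with respect to $S$ if for every simple relation $s_1\cdots s_n=e$ with $n\ge k$ there exist $1\le i\le i_0$, $i<j\le n$ and $s'_1,\dots,s'_r\in S^{\pm1}$ with $s_i\cdots s_j=s'_1\cdots s'_r$ and $r\le\min\{m,\,j-i,\,n-j+i-2\}$. *)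

From Stdlib Require Import List Arith Lia.
Import ListNotations.
Set Implicit Arguments.

Definition is_group (G : Type) (mul : G -> G -> G) (inv : G -> G) (e : G) : Prop :=
  (forall x y z, mul x (mul y z) = mul (mul x y) z) /\
  (forall x, mul e x = x) /\ (forall x, mul x e = x) /\
  (forall x, mul (inv x) x = e) /\ (forall x, mul x (inv x) = e).

Definition wprod (G : Type) (mul : G -> G -> G) (e : G) (w : list G) : G :=
  fold_right mul e w.

Definition Spm (G : Type) (inv : G -> G) (e : G) (S : list G) (x : G) : Prop :=
  (In x S \/ In (inv x) S) /\ x <> e.

Definition generates (G : Type) (mul : G -> G -> G) (inv : G -> G) (e : G)
  (S : list G) : Prop :=
  forall g, exists w, Forall (Spm inv e S) w /\ wprod mul e w = g.

(** the subword s_p ... s_q (1-indexed, p <= q) *)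
Definition seg (G : Type) (w : list G) (p q : nat) : list G :=
  firstn (S q - p) (skipn (p - 1) w).

Definition simple_relation (G : Type) (mul : G -> G -> G) (inv : G -> G) (e : G)
  (S : list G) (w : list G) : Prop :=
  2 < length w /\ Forall (Spm inv e S) w /\ wprod mul e w = e /\
  (forall p q, 1 <= p -> p <= q -> q <= length w ->
     (wprod mul e (seg w p q) = e <-> (p = 1 /\ q = length w))).

(** (i0,k,m)-chordality. The bound r <= n - j + i - 2 is written
    r + 2 + j <= n + i to avoid truncated subtraction. *)
Definition chordal (G : Type) (mul : G -> G -> G) (inv : G -> G) (e : G)
  (S : list G) (i0 k m : nat) : Prop :=
  forall w, simple_relation mul inv e S w -> k <= length w ->
    exists i j w', 1 <= i /\ i <= i0 /\ i < j /\ j <= length w /\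
      Forall (Spm inv e S) w' /\
      wprod mul e (seg w i j) = wprod mul e w' /\
      length w' <= m /\ length w' <= j - i /\
      length w' + 2 + j <= length w + i.

Inductive walk (V : Type) (adj : V -> V -> Prop) : nat -> V -> V -> Prop :=
| walk0 x : walk adj 0 x x
| walkS n x y z : adj x y -> walk adj n y z -> walk adj (S n) x z.

Definition gdist (V : Type) (adj : V -> V -> Prop) (x y : V) (n : nat) : Prop :=
  walk adj n x y /\ forall m, walk adj m x y -> n <= m.

Definition connected (V : Type) (adj : V -> V -> Prop) : Prop :=
  forall x y, exists n, walk adj n x y.

Fixpoint chain (V : Type) (adj : V -> V -> Prop) (x : V) (l : list V) : Prop :=
  match l with
  | [] => True
  | y :: l' => adj x y /\ chain adj y l'
  end.

Definition is_tree (V : Type) (adj : V -> V -> Prop) : Prop :=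
  (forall x y, adj x y -> adj y x) /\ (forall x, ~ adj x x) /\
  connected adj /\
  (forall (x : V) (l : list V), 2 <= length l -> NoDup (x :: l) ->
     chain adj x l -> ~ adj (last l x) x).

Definition quasi_isometric (V W : Type) (adjV : V -> V -> Prop)
  (adjW : W -> W -> Prop) : Prop :=
  exists (f : V -> W) (L C : nat),
    (forall x y dx dy, gdist adjV x y dx -> gdist adjW (f x) (f y) dy ->
        dy <= L * dx + C /\ dx <= L * dy + C) /\
    (forall w, exists x d, gdist adjW (f x) w d /\ d <= C).

Definition cay_adj (G : Type) (mul : G -> G -> G) (inv : G -> G) (e : G)
  (S : list G) (g h : G) : Prop :=
  exists s, Spm inv e S s /\ h = mul g s.

Definition qi_to_tree (V : Type) (adj : V -> V -> Prop) : Prop :=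
  exists (T : Type) (adjT : T -> T -> Prop), is_tree adjT /\ quasi_isometric adj adjT.

(* If Cay(G,S) is quasi-isometric to a tree, map a long simple cycle c into the tree: both arcs
   of c between c 0 and c (M - 1) become coarse paths with the same ends, and in a tree every
   path between two points passes through the whole geodesic joining them. So both arcs come
   close to the midpoint of that geodesic, and pulling back gives a short chord starting near
   c 0 (unless c 0 and c (M - 1) are already close).

   Conversely, chordality yields a bottleneck property: every path between the ends of a
   geodesic passes within i0 + m + k of each of its points, since otherwise the path and the
   geodesic would bound a long simple cycle with no admissible chord near its start. Hence each
   connected component of {v | d(o, v) >= n} meets the sphere of radius n in a set of bounded
   diameter, and the tree of these components, each joined to the component one level down
   that contains it, is quasi-isometric to the graph.

   Simple relations are exactly the simple cycles through e, and a chord of a relation is a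
   short path between two vertices of the cycle, so everything happens in the Cayley graph. *)

From Stdlib Require Import List Arith Lia Wf_nat Classical ClassicalEpsilon.
From Stdlib Require Import FunctionalExtensionality PropExtensionality ProofIrrelevance.
Import ListNotations.
Set Implicit Arguments.

Lemma least_witness (P : nat -> Prop) :
  (exists n, P n) -> exists n, P n /\ forall m, P m -> n <= m.
Proof.
  intro H.
  destruct (dec_inh_nat_subset_has_unique_least_element P (fun n => classic (P n)) H)
    as [n [Hn _]].
  eauto.
Qed.

Lemma greatest_witness_upto (P : nat -> Prop) D :
  P 0 -> exists u, u <= D /\ P u /\ forall v, u < v <= D -> ~ P v.
Proof.
  intro H0. induction D as [|D IH].
  - exists 0. repeat split; auto; lia.
  - destruct (classic (P (S D))) as [HD|HD].
    + exists (S D). repeat split; auto; lia.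
    + destruct IH as [u [Hu [Pu Hmax]]]. exists u. repeat split; [lia|auto|].
      intros v Hv. destruct (Nat.eq_dec v (S D)) as [->|]; auto. apply Hmax; lia.
Qed.

Lemma argmax_upto (g : nat -> nat) N :
  exists p, p <= N /\ forall q, q <= N -> g q <= g p.
Proof.
  induction N as [|N [p [Hp Hmax]]].
  - exists 0. split; auto. intros q Hq. replace q with 0 by lia. auto.
  - destruct (le_lt_dec (g (S N)) (g p)).
    + exists p. split; [lia|]. intros q Hq.
      destruct (Nat.eq_dec q (S N)) as [->|]; auto. apply Hmax; lia.
    + exists (S N). split; auto. intros q Hq.
      destruct (Nat.eq_dec q (S N)) as [->|]; auto. specialize (Hmax q ltac:(lia)). lia.
Qed.

(** * Paths, linked sets and distance *)

Section Paths.
Context {V : Type} (adj : V -> V -> Prop).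

Definition is_path (c : nat -> V) (n : nat) : Prop :=
  forall t, t < n -> adj (c t) (c (S t)).

Lemma walk_is_path n x y : walk adj n x y -> exists c, is_path c n /\ c 0 = x /\ c n = y.
Proof.
  induction 1 as [x|n x y z Hxy _ [c [Hc [H0 Hn]]]].
  - exists (fun _ => x). repeat split; intros t Ht; lia.
  - exists (fun t => match t with 0 => x | S t' => c t' end). repeat split; auto.
    intros [|t] Ht; simpl; [rewrite H0; auto|]. apply Hc; lia.
Qed.

Lemma is_path_walk c n : is_path c n -> walk adj n (c 0) (c n).
Proof.
  revert c; induction n as [|n IH]; intros c Hc; [constructor|].
  apply walkS with (c 1); [apply Hc; lia|].
  apply (IH (fun t => c (S t))). intros t Ht. apply Hc. lia.
Qed.

Lemma walk_app n m x y z : walk adj n x y -> walk adj m y z -> walk adj (n + m) x z.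
Proof. induction 1; intros; simpl; auto. eapply walkS; eauto. Qed.

Definition path_cat (c : nat -> V) (n : nat) (d : nat -> V) (t : nat) : V :=
  if t <=? n then c t else d (t - n).

Lemma path_cat_l c n d t : t <= n -> path_cat c n d t = c t.
Proof. intro H. unfold path_cat. destruct (Nat.leb_spec t n); auto; lia. Qed.

Lemma path_cat_r c n d t : c n = d 0 -> n <= t -> path_cat c n d t = d (t - n).
Proof.
  intros E H. unfold path_cat. destruct (Nat.leb_spec t n); auto.
  replace t with n by lia. rewrite Nat.sub_diag. auto.
Qed.

Lemma is_path_cat c n d m :
  is_path c n -> is_path d m -> c n = d 0 -> is_path (path_cat c n d) (n + m).
Proof.
  intros Hc Hd E t Ht. destruct (le_lt_dec (S t) n).
  - rewrite !path_cat_l by lia. apply Hc. lia.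
  - rewrite !path_cat_r by (auto; lia). replace (S t - n) with (S (t - n)) by lia.
    apply Hd. lia.
Qed.

Definition linked (P : V -> Prop) (x y : V) : Prop :=
  exists c n, is_path c n /\ c 0 = x /\ c n = y /\ forall t, t <= n -> P (c t).

Lemma linked_refl (P : V -> Prop) x : P x -> linked P x x.
Proof. intro. exists (fun _ => x), 0. repeat split; auto. intros t Ht; lia. Qed.

Lemma linked_ends P x y : linked P x y -> P x /\ P y.
Proof.
  intros [c [n [_ [<- [<- HP]]]]]. split; apply HP; lia.
Qed.

Lemma linked_mono (P Q : V -> Prop) x y :
  (forall v, P v -> Q v) -> linked P x y -> linked Q x y.
Proof. intros H [c [n [Hc [H0 [Hn HP]]]]]. exists c, n. repeat split; auto. Qed.

Lemma linked_trans P x y z : linked P x y -> linked P y z -> linked P x z.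
Proof.
  intros [c [n [Hc [H0 [Hn HP]]]]] [d [m [Hd [G0 [Gm HQ]]]]].
  assert (E : c n = d 0) by congruence.
  exists (path_cat c n d), (n + m). repeat split.
  - apply is_path_cat; auto.
  - rewrite path_cat_l; auto. lia.
  - rewrite path_cat_r by (auto; lia). replace (n + m - n) with m by lia. auto.
  - intros t Ht. destruct (le_lt_dec t n).
    + rewrite path_cat_l; auto.
    + rewrite path_cat_r by (auto; lia). apply HQ. lia.
Qed.

Lemma linked_adj (P : V -> Prop) x y : adj x y -> P x -> P y -> linked P x y.
Proof.
  intros A Hx Hy. exists (fun t => match t with 0 => x | _ => y end), 1. repeat split; auto.
  - intros t Ht. replace t with 0 by lia. auto.
  - intros [|t] Ht; auto.
Qed.

Lemma linked_subpath P c n a b : is_path c n -> a <= b -> b <= n ->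
  (forall t, a <= t <= b -> P (c t)) -> linked P (c a) (c b).
Proof.
  intros Hc Hab Hb HP. exists (fun t => c (a + t)), (b - a). repeat split.
  - intros t Ht. replace (a + S t) with (S (a + t)) by lia. apply Hc. lia.
  - rewrite Nat.add_0_r. auto.
  - f_equal. lia.
  - intros t Ht. apply HP. lia.
Qed.

(* A shortest path inside P cannot revisit a vertex: cutting out the loop would shorten it. *)
Lemma linked_injective_path P x y : linked P x y ->
  exists c n, is_path c n /\ c 0 = x /\ c n = y /\ (forall t, t <= n -> P (c t)) /\
    (forall a b, a <= n -> b <= n -> c a = c b -> a = b).
Proof.
  intros [c0 [n0 Hc0]].
  destruct (least_witness (fun n => exists c, is_path c n /\ c 0 = x /\ c n = y /\
                                       forall t, t <= n -> P (c t))) as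
    [n [[c [Hc [H0 [Hn HP]]]] Hmin]]; [eauto|].
  exists c, n. repeat split; auto.
  assert (Hlt : forall a b, a < b -> b <= n -> c a = c b -> False).
  { intros a b Hab Hb E.
    enough (n <= n - (b - a)) by lia.
    apply Hmin. exists (fun t => if t <=? a then c t else c (t + (b - a))). repeat split.
    - intros t Ht. destruct (Nat.leb_spec t a), (Nat.leb_spec (S t) a); try lia.
      + apply Hc. lia.
      + replace t with a by lia. rewrite E. replace (S a + (b - a)) with (S b) by lia.
        apply Hc. lia.
      + replace (S t + (b - a)) with (S (t + (b - a))) by lia. apply Hc. lia.
    - auto.
    - destruct (Nat.leb_spec (n - (b - a)) a).
      + replace (n - (b - a)) with a by lia. rewrite E, <- Hn. f_equal. lia.
      + rewrite <- Hn. f_equal. lia.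
    - intros t Ht. destruct (Nat.leb_spec t a); apply HP; lia. }
  intros a b Ha Hb E. destruct (lt_eq_lt_dec a b) as [[|]|]; auto.
  - exfalso. eapply Hlt; eauto.
  - exfalso. eapply Hlt; eauto.
Qed.

Hypothesis adj_sym : forall x y, adj x y -> adj y x.

Lemma is_path_rev c n : is_path c n -> is_path (fun t => c (n - t)) n.
Proof.
  intros H t Ht. apply adj_sym. replace (n - t) with (S (n - S t)) by lia. apply H. lia.
Qed.

Lemma walk_rev n x y : walk adj n x y -> walk adj n y x.
Proof.
  intro H. destruct (walk_is_path H) as [c [Hc [<- <-]]].
  pose proof (is_path_walk (is_path_rev Hc)) as W.
  cbv beta in W. rewrite Nat.sub_0_r, Nat.sub_diag in W. exact W.
Qed.

Lemma linked_sym P x y : linked P x y -> linked P y x.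
Proof.
  intros [c [n [Hc [H0 [Hn HP]]]]]. exists (fun t => c (n - t)), n. repeat split.
  - apply is_path_rev. auto.
  - rewrite Nat.sub_0_r. auto.
  - rewrite Nat.sub_diag. auto.
  - intros t Ht. apply HP. lia.
Qed.

(* A junk value unless x and y are joined by a walk; the lemmas below assume connectedness. *)
Definition dist (x y : V) : nat := epsilon (inhabits 0) (gdist adj x y).

Hypothesis adj_connected : connected adj.

Lemma dist_spec x y : gdist adj x y (dist x y).
Proof.
  unfold dist. apply epsilon_spec.
  destruct (least_witness (fun n => walk adj n x y)) as [n [Hn Hmin]]; [apply adj_connected|].
  exists n. split; auto.
Qed.

Lemma dist_le n x y : walk adj n x y -> dist x y <= n.
Proof. apply dist_spec. Qed.

Lemma dist_walk x y : walk adj (dist x y) x y.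
Proof. apply dist_spec. Qed.

Lemma gdist_dist x y d : gdist adj x y d -> d = dist x y.
Proof.
  intros [W Hmin]. pose proof (dist_le W). specialize (Hmin _ (dist_walk x y)). lia.
Qed.

Lemma dist_refl x : dist x x = 0.
Proof. pose proof (dist_le (walk0 adj x)). lia. Qed.

Lemma dist_eq0 x y : dist x y = 0 -> x = y.
Proof. intro H. pose proof (dist_walk x y) as W. rewrite H in W. inversion W. auto. Qed.

Lemma dist_sym x y : dist x y = dist y x.
Proof.
  pose proof (dist_le (walk_rev (dist_walk x y))).
  pose proof (dist_le (walk_rev (dist_walk y x))). lia.
Qed.

Lemma dist_tri x y z : dist x z <= dist x y + dist y z.
Proof. apply dist_le. apply walk_app with y; apply dist_walk. Qed.

Lemma dist_adj x y : adj x y -> dist x y <= 1.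
Proof. intro H. apply dist_le. apply walkS with y; [exact H | constructor]. Qed.

Lemma dist_subpath_le c n a b : is_path c n -> a <= b -> b <= n -> dist (c a) (c b) <= b - a.
Proof.
  intros Hc Hab Hb.
  assert (W : walk adj (b - a) (c (a + 0)) (c (a + (b - a)))).
  { apply (is_path_walk (c := fun t => c (a + t))).
    intros t Ht. replace (a + S t) with (S (a + t)) by lia. apply Hc. lia. }
  rewrite Nat.add_0_r in W. replace (a + (b - a)) with b in W by lia. exact (dist_le W).
Qed.

Definition geodesic (c : nat -> V) (n : nat) : Prop := is_path c n /\ dist (c 0) (c n) = n.

Lemma geodesic_exists x y :
  exists c, geodesic c (dist x y) /\ c 0 = x /\ c (dist x y) = y.
Proof.
  destruct (walk_is_path (dist_walk x y)) as [c [Hc [H0 Hn]]].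
  exists c. repeat split; auto. congruence.
Qed.

Lemma geodesic_dist c n a b : geodesic c n -> a <= b -> b <= n -> dist (c a) (c b) = b - a.
Proof.
  intros [Hc Hn] Hab Hb.
  pose proof (dist_subpath_le Hc Hab Hb).
  pose proof (dist_subpath_le Hc (Nat.le_0_l a) (Nat.le_trans _ _ _ Hab Hb)).
  pose proof (dist_subpath_le Hc Hb (le_n n)).
  pose proof (dist_tri (c 0) (c a) (c n)). pose proof (dist_tri (c a) (c b) (c n)). lia.
Qed.

Lemma geodesic_inj c n a b : geodesic c n -> a <= n -> b <= n -> c a = c b -> a = b.
Proof.
  intros Hc Ha Hb E. destruct (le_lt_dec a b).
  - pose proof (geodesic_dist Hc l Hb) as G. rewrite E, dist_refl in G. lia.
  - pose proof (geodesic_dist Hc (Nat.lt_le_incl _ _ l) Ha) as G. rewrite E, dist_refl in G. lia.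
Qed.

Lemma dist_pred_neighbor o x n : dist o x = S n -> exists y, adj y x /\ dist o y = n.
Proof.
  intro H. destruct (geodesic_exists o x) as [c [Hc [H0 Hn]]]. rewrite H in Hc, Hn.
  exists (c n). split.
  - rewrite <- Hn. apply Hc. lia.
  - pose proof (geodesic_dist Hc (Nat.le_0_l n) (Nat.le_succ_diag_r n)) as G.
    rewrite H0 in G. lia.
Qed.

Lemma coarse_path_linked (q : nat -> V) a b J : a <= b ->
  (forall t, a <= t < b -> dist (q t) (q (S t)) <= J) ->
  linked (fun v => exists t, a <= t <= b /\ dist (q t) v <= J) (q a) (q b).
Proof.
  intros Hab Hq. induction Hab as [|b Hab IH].
  - apply linked_refl. exists a. rewrite dist_refl. split; lia.
  - apply linked_trans with (q b).
    + eapply linked_mono; [|apply IH; intros; apply Hq; lia].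
      intros v [t [Ht Hd]]. exists t. split; auto. lia.
    + destruct (geodesic_exists (q b) (q (S b))) as [g [Hg [G0 G1]]].
      rewrite <- G0, <- G1. apply linked_subpath with (dist (q b) (q (S b))); auto;
        [apply Hg | lia |].
      intros t Ht. exists b. split; [lia|]. rewrite <- G0, (geodesic_dist Hg) by lia.
      specialize (Hq b ltac:(lia)). lia.
Qed.

End Paths.

(** * Trees *)

Lemma last_cons (A : Type) (a : A) l d : last (a :: l) d = last l a.
Proof.
  revert a d. induction l as [|b l IH]; intros a d; [reflexivity|].
  change (last (b :: l) d = last (b :: l) a). rewrite !IH. reflexivity.
Qed.

Section Acyclic.
Context {V : Type} (adj : V -> V -> Prop).

Lemma chain_map (c : nat -> V) k N : (forall t, k <= t < k + N -> adj (c t) (c (S t))) ->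
  chain adj (c k) (map c (seq (S k) N)).
Proof.
  revert k. induction N as [|N IH]; intros k H; simpl; auto.
  split; [apply H; lia|]. apply IH. intros t Ht. apply H. lia.
Qed.

Lemma last_map_seq (c : nat -> V) k N : last (map c (seq (S k) N)) (c k) = c (k + N).
Proof.
  revert k. induction N as [|N IH]; intros k; [simpl; f_equal; lia|].
  simpl map. rewrite last_cons, IH. f_equal. lia.
Qed.

Lemma chain_nth x l d : chain adj x l ->
  forall t, t < length l -> adj (nth t (x :: l) d) (nth (S t) (x :: l) d).
Proof.
  revert x. induction l as [|y l IH]; intros x Hch t Ht; simpl in *; [lia|].
  destruct Hch as [Hxy Hl]. destruct t; auto. apply (IH y Hl). lia.
Qed.

Lemma last_nth (x : V) l : last l x = nth (length l) (x :: l) x.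
Proof.
  revert x. induction l as [|y l IH]; intros x; auto.
  rewrite last_cons, IH.
  change (nth (length l) (y :: l) y = nth (length l) (y :: l) x).
  apply nth_indep. simpl. lia.
Qed.

Lemma is_tree_no_injective_cycle c N : is_tree adj -> 2 <= N -> is_path adj c N ->
  adj (c N) (c 0) -> (forall a b, a <= N -> b <= N -> c a = c b -> a = b) -> False.
Proof.
  intros [_ [_ [_ Hcyc]]] HN Hc Hclose Hinj.
  apply (Hcyc (c 0) (map c (seq 1 N))).
  - rewrite length_map, length_seq. auto.
  - change (NoDup (map c (seq 0 (S N)))). apply NoDup_nth with (d := c 0).
    rewrite length_map, length_seq. intros i j Hi Hj E.
    rewrite !(map_nth c (seq 0 (S N)) 0), !seq_nth in E by lia. apply Hinj; auto; lia.
  - apply chain_map. intros t Ht. apply Hc. lia.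
  - rewrite last_map_seq. auto.
Qed.

Hypothesis adj_sym : forall x y, adj x y -> adj y x.

(* On a cycle, a vertex of maximal height would have two distinct lower neighbours. *)
Lemma unique_parent_no_cycle (h : V -> nat) :
  (forall a b, adj a b -> h b = S (h a) \/ h a = S (h b)) ->
  (forall a b1 b2, adj a b1 -> adj a b2 -> h b1 < h a -> h b2 < h a -> b1 = b2) ->
  forall x l, 2 <= length l -> NoDup (x :: l) -> chain adj x l -> ~ adj (last l x) x.
Proof.
  intros Hlevel Hparent x l Hlen Hnd Hch Hclose.
  set (N := length l) in *. set (c := fun t => nth t (x :: l) x).
  assert (Hc : forall t, t < N -> adj (c t) (c (S t))) by (apply chain_nth; auto).
  assert (HcN : adj (c N) (c 0)) by (unfold c, N; rewrite <- last_nth; exact Hclose).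
  assert (Hinj : forall a b, a <= N -> b <= N -> c a = c b -> a = b).
  { intros a b Ha Hb E. apply (proj1 (NoDup_nth (x :: l) x) Hnd); simpl; auto; lia. }
  destruct (argmax_upto (fun t => h (c t)) N) as [p [Hp Hmax]].
  assert (Hlow : forall q, q <= N -> adj (c p) (c q) -> h (c q) < h (c p)).
  { intros q Hq A. specialize (Hmax q Hq). destruct (Hlevel _ _ A); lia. }
  assert (Hnb : forall q1 q2, q1 <= N -> q2 <= N -> adj (c p) (c q1) -> adj (c p) (c q2) ->
                q1 = q2).
  { intros q1 q2 H1 H2 A1 A2. apply Hinj; auto. apply (Hparent (c p)); auto; apply Hlow; auto. }
  destruct (Nat.eq_dec p 0) as [->|Hp0]; [|destruct (Nat.eq_dec p N) as [->|HpN]].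
  - enough (1 = N) by lia. apply Hnb; auto; [lia | apply Hc; lia].
  - enough (N - 1 = 0) by lia.
    apply Hnb; auto; try lia. apply adj_sym.
    replace N with (S (N - 1)) at 2 by lia. apply Hc. lia.
  - enough (p - 1 = S p) by lia.
    apply Hnb; try lia; [|apply Hc; lia]. apply adj_sym.
    replace p with (S (p - 1)) at 2 by lia. apply Hc. lia.
Qed.

End Acyclic.

Section Trees.
Context {T : Type} (adjT : T -> T -> Prop) (tree : is_tree adjT).

Let adjT_sym : forall x y, adjT x y -> adjT y x := proj1 tree.
Let adjT_connected : connected adjT := proj1 (proj2 (proj2 tree)).

(* Otherwise the neighbours of tau u on the geodesic would be joined avoiding tau u,
   closing a cycle through tau u. *)
Lemma tree_geodesic_cut P tau D : geodesic adjT tau D -> linked adjT P (tau 0) (tau D) ->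
  forall u, u <= D -> P (tau u).
Proof.
  intros Htau HP u Hu.
  destruct (linked_ends HP) as [HP0 HPD].
  destruct (Nat.eq_dec u 0) as [->|Hu0]; auto.
  destruct (Nat.eq_dec u D) as [->|HuD]; auto.
  apply NNPP. intro HPu.
  set (Q := fun v => v <> tau u).
  assert (Hgeo : forall v, v <= D -> v <> u -> Q (tau v)).
  { intros v Hv Hvu E. apply Hvu. apply (geodesic_inj adjT_connected Htau); auto. }
  assert (Hlink : linked adjT Q (tau (S u)) (tau (u - 1))).
  { apply linked_trans with (tau D); [|apply linked_trans with (tau 0)].
    - apply linked_subpath with D; try apply Htau; try lia. intros t Ht. apply Hgeo; lia.
    - apply linked_sym; auto. eapply linked_mono; [|exact HP]. intros v Hv E. subst. auto.
    - apply linked_subpath with D; try apply Htau; try lia. intros t Ht. apply Hgeo; lia. }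
  destruct (linked_injective_path Hlink) as [pi [l [Hpi [Hpi0 [Hpil [HpiQ Hinj]]]]]].
  assert (Hl : 2 <= l).
  { pose proof (geodesic_dist adjT_connected Htau (a := u - 1) (b := S u)) as G.
    rewrite (dist_sym adjT_sym adjT_connected) in G.
    pose proof (dist_le adjT_connected (is_path_walk Hpi)) as Hd. rewrite Hpi0, Hpil in Hd.
    lia. }
  apply (is_tree_no_injective_cycle (c := fun t => match t with 0 => tau u | S t' => pi t' end)
           (N := S l) tree).
  - lia.
  - intros [|t] Ht; [rewrite Hpi0; apply Htau; lia | apply Hpi; lia].
  - rewrite Hpil. replace u with (S (u - 1)) at 2 by lia. apply Htau. lia.
  - intros [|a] [|b] Ha Hb E; auto.
    + exfalso. apply (HpiQ b ltac:(lia)). auto.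
    + exfalso. apply (HpiQ a ltac:(lia)). auto.
    + f_equal. apply Hinj; auto; lia.
Qed.

End Trees.

(** * Quasi-isometric to a tree implies chordal *)

Definition simple_cycle (V : Type) (adj : V -> V -> Prop) (c : nat -> V) (n : nat) : Prop :=
  is_path adj c n /\ c n = c 0 /\ 2 < n /\
  forall a b, a < b -> b <= n -> c a = c b -> a = 0 /\ b = n.

(* The graph form of [chordal]: the chord, of length r, joins c (i - 1) to c j and so
   shortcuts the arc of the cycle labelled by the subword s_i ... s_j. *)
Definition cycle_chordal (V : Type) (adj : V -> V -> Prop) (i0 k m : nat) : Prop :=
  forall c n, simple_cycle adj c n -> k <= n ->
    exists i j r, 1 <= i /\ i <= i0 /\ i < j /\ j <= n /\ walk adj r (c (i - 1)) (c j) /\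
      r <= m /\ r <= j - i /\ r + 2 + j <= n + i.

Section QuasiIsometricToTree.
Context {V : Type} (adj : V -> V -> Prop).
Hypothesis adj_connected : connected adj.
Context {T : Type} (adjT : T -> T -> Prop) (tree : is_tree adjT).
Variables (f : V -> T) (L C : nat).
Hypothesis L_pos : 1 <= L.
Hypothesis f_upper : forall x y, dist adjT (f x) (f y) <= L * dist adj x y + C.
Hypothesis f_lower : forall x y, dist adj x y <= L * dist adjT (f x) (f y) + C.

Let adjT_sym : forall x y, adjT x y -> adjT y x := proj1 tree.
Let adjT_connected : connected adjT := proj1 (proj2 (proj2 tree)).

(* An edge is mapped to a pair at distance at most J, and points whose images are within 2 J
   are at distance at most m0; Q and M leave room for the midpoint argument below. *)
Let J := L + C.
Let m0 := L * (2 * J) + C.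
Let B := m0 + 2.
Let Q := L * B + J + C.
Let M := L * (2 * Q + 1) + C + 3.

Lemma f_path_upper c n a b : is_path adj c n -> a <= b -> b <= n ->
  dist adjT (f (c a)) (f (c b)) <= L * (b - a) + C.
Proof.
  intros Hc Hab Hb. pose proof (f_upper (c a) (c b)).
  pose proof (Nat.mul_le_mono_l _ _ L (dist_subpath_le adj_connected Hc Hab Hb)). lia.
Qed.

Lemma f_arc_linked c n a b : is_path adj c n -> a <= b -> b <= n ->
  linked adjT (fun v => exists t, a <= t <= b /\ dist adjT (f (c t)) v <= J)
    (f (c a)) (f (c b)).
Proof.
  intros Hc Hab Hb. apply (coarse_path_linked adjT_connected (fun t => f (c t))); auto.
  intros t Ht. pose proof (f_path_upper (a := t) (b := S t) Hc ltac:(lia) ltac:(lia)).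
  unfold J. lia.
Qed.

(* Both arcs of the cycle between c 0 and c (M - 1) map to coarse paths, which in a tree
   pass near the midpoint of the geodesic joining the images of their ends. *)
Lemma arcs_meet_near_midpoint c n : is_path adj c n -> c n = c 0 -> M - 1 <= n ->
  dist adj (c 0) (c (M - 1)) = M - 1 ->
  exists a b, B <= a /\ a + B <= M - 1 /\ M - 1 <= b /\ b <= n /\ dist adj (c a) (c b) <= m0.
Proof.
  intros Hc Hclose Hn Hfar.
  destruct (geodesic_exists adjT_connected (f (c 0)) (f (c (M - 1)))) as [tau [Htau [T0 TD]]].
  set (D := dist adjT (f (c 0)) (f (c (M - 1)))) in *.
  assert (HD : 2 * Q + 1 <= D).
  { apply (Nat.mul_le_mono_pos_l _ _ L); [lia|].
    pose proof (f_lower (c 0) (c (M - 1))) as Hlow. fold D in Hlow. rewrite Hfar in Hlow.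
    unfold M in Hlow. lia. }
  set (u := D / 2).
  assert (Hu1 : Q <= u) by (apply Nat.div_le_lower_bound; lia).
  assert (Hu2 : Q <= D - u) by (pose proof (Nat.Div0.mul_div_le D 2); lia).
  assert (Hu0 : dist adjT (f (c 0)) (tau u) = u).
  { rewrite <- T0, (geodesic_dist adjT_connected Htau); lia. }
  assert (HuD : dist adjT (tau u) (f (c (M - 1))) = D - u).
  { rewrite <- TD, (geodesic_dist adjT_connected Htau); lia. }
  assert (Ha : exists a, 0 <= a <= M - 1 /\ dist adjT (f (c a)) (tau u) <= J).
  { apply (tree_geodesic_cut tree
             (P := fun v => exists t, 0 <= t <= M - 1 /\ dist adjT (f (c t)) v <= J) Htau);
      [|lia].
    rewrite T0, TD. apply f_arc_linked with n; auto. lia. }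
  assert (Hb : exists b, M - 1 <= b <= n /\ dist adjT (f (c b)) (tau u) <= J).
  { apply (tree_geodesic_cut tree
             (P := fun v => exists t, M - 1 <= t <= n /\ dist adjT (f (c t)) v <= J) Htau);
      [|lia].
    rewrite T0, TD, <- Hclose. apply (linked_sym adjT_sym). apply f_arc_linked with n; auto. }
  destruct Ha as [a [Ha Hda]], Hb as [b [Hb Hdb]].
  exists a, b. repeat split; try lia.
  - apply (Nat.mul_le_mono_pos_l _ _ L); [lia|].
    pose proof (f_path_upper Hc (Nat.le_0_l a) ltac:(lia)) as Hup. rewrite Nat.sub_0_r in Hup.
    pose proof (dist_tri adjT_connected (f (c 0)) (f (c a)) (tau u)). unfold Q in Hu1. lia.
  - enough (B <= M - 1 - a) by lia. apply (Nat.mul_le_mono_pos_l _ _ L); [lia|].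
    pose proof (f_path_upper Hc (proj2 Ha) Hn).
    pose proof (dist_tri adjT_connected (tau u) (f (c a)) (f (c (M - 1)))) as Htri.
    rewrite (dist_sym adjT_sym adjT_connected (tau u) (f (c a))) in Htri. unfold Q in Hu2. lia.
  - pose proof (dist_tri adjT_connected (f (c a)) (tau u) (f (c b))) as Htri.
    rewrite (dist_sym adjT_sym adjT_connected (tau u)) in Htri.
    pose proof (f_lower (c a) (c b)).
    pose proof (Nat.mul_le_mono_l (dist adjT (f (c a)) (f (c b))) (2 * J) L ltac:(lia)).
    unfold m0. lia.
Qed.

Lemma qi_tree_chords : cycle_chordal adj M (2 * M) (M + m0).
Proof.
  intros c n [Hc [Hclose [Hn _]]] HnM.
  pose proof (dist_subpath_le adj_connected Hc (Nat.le_0_l (M - 1)) ltac:(lia)) as Hshort.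
  destruct (Nat.eq_dec (dist adj (c 0) (c (M - 1))) (M - 1)) as [Hfar|Hnear].
  - destruct (arcs_meet_near_midpoint Hc Hclose ltac:(lia) Hfar)
      as [a [b [Ha [HaM [Hb [Hbn Hab]]]]]].
    exists (S a), b, (dist adj (c a) (c b)). rewrite Nat.sub_succ, Nat.sub_0_r.
    repeat split; try (unfold B in *; lia). apply (dist_walk adj_connected).
  - exists 1, (M - 1), (dist adj (c 0) (c (M - 1))).
    repeat split; try (unfold M in *; lia). apply (dist_walk adj_connected).
Qed.

End QuasiIsometricToTree.

Theorem qi_tree_cycle_chordal (V : Type) (adj : V -> V -> Prop) :
  connected adj -> qi_to_tree adj -> exists i0 k m, cycle_chordal adj i0 k m.
Proof.
  intros Hconn [T [adjT [Htree [f [L [C [Hqi _]]]]]]].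
  assert (HconnT : connected adjT) by apply Htree.
  assert (Hf : forall x y, dist adjT (f x) (f y) <= S L * dist adj x y + C /\
                           dist adj x y <= S L * dist adjT (f x) (f y) + C).
  { intros x y. destruct (Hqi x y _ _ (dist_spec Hconn x y) (dist_spec HconnT (f x) (f y))).
    split; lia. }
  eexists _, _, _. apply (qi_tree_chords Hconn Htree f (L := S L) C); [lia | apply Hf..].
Qed.

(** * The tree of outer components *)

Section LevelTree.
Context {V : Type} (adj : V -> V -> Prop).
Hypothesis adj_sym : forall x y, adj x y -> adj y x.
Hypothesis adj_connected : connected adj.
Variables (o : V) (K : nat).

Definition outer_comp (n : nat) : V -> V -> Prop := linked adj (fun v => n <= dist adj o v).

Hypothesis sphere_comp_bounded : forall n x y,
  dist adj o x = n -> dist adj o y = n -> outer_comp n x y -> dist adj x y <= K.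

Lemma outer_comp_refl n x : n <= dist adj o x -> outer_comp n x x.
Proof. intro H. apply (linked_refl adj (fun v => n <= dist adj o v)). exact H. Qed.

Lemma outer_comp_trans n x y z : outer_comp n x y -> outer_comp n y z -> outer_comp n x z.
Proof. apply linked_trans. Qed.

Lemma outer_comp_eq n x y : outer_comp n x y -> outer_comp n x = outer_comp n y.
Proof.
  intro H. apply functional_extensionality. intro z. apply propositional_extensionality.
  split; intro H'.
  - apply outer_comp_trans with x; auto. apply (linked_sym adj_sym). auto.
  - apply outer_comp_trans with y; auto.
Qed.

(* The tree has a vertex (n, outer_comp n x) for every x at distance n from o; a component at
   level n + 1 is joined to the component at level n that contains it. *)
Definition level_vertex : Type :=
  { p : nat * (V -> Prop) | exists x, dist adj o x = fst p /\ snd p = outer_comp (fst p) x }.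

Definition level_child (a b : level_vertex) : Prop :=
  fst (proj1_sig b) = S (fst (proj1_sig a)) /\
  forall y, snd (proj1_sig b) y -> snd (proj1_sig a) y.

Definition level_adj (a b : level_vertex) : Prop := level_child a b \/ level_child b a.

Definition level_of (x : V) : level_vertex :=
  exist _ (dist adj o x, outer_comp (dist adj o x) x) (ex_intro _ x (conj eq_refl eq_refl)).

Lemma level_adj_sym a b : level_adj a b -> level_adj b a.
Proof. unfold level_adj. tauto. Qed.

Lemma level_vertex_eq (a b : level_vertex) : proj1_sig a = proj1_sig b -> a = b.
Proof. destruct a, b. simpl. intros ->. f_equal. apply proof_irrelevance. Qed.

Lemma level_of_surj (a : level_vertex) : exists x, a = level_of x.
Proof.
  destruct a as [[n P] [x [Hx HP]]]. simpl in *. subst. exists x. apply level_vertex_eq. auto.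
Qed.

Lemma level_of_eq x y :
  dist adj o x = dist adj o y -> outer_comp (dist adj o x) x y -> level_of x = level_of y.
Proof.
  intros E H. apply level_vertex_eq. simpl. rewrite <- E. f_equal. apply outer_comp_eq. auto.
Qed.

Lemma level_of_inj x y : level_of x = level_of y ->
  dist adj o x = dist adj o y /\ outer_comp (dist adj o x) x y.
Proof.
  intro E. apply (f_equal (@proj1_sig _ _)) in E. simpl in E. injection E as E1 E2.
  split; auto. rewrite E2. apply outer_comp_refl. lia.
Qed.

Lemma dist_root_adj x y : adj x y -> dist adj o y <= S (dist adj o x).
Proof.
  intro A. pose proof (dist_tri adj_connected o x y).
  pose proof (dist_adj adj_connected x y A). lia.
Qed.

Lemma level_child_of x y : dist adj o y = S (dist adj o x) -> adj x y ->
  level_child (level_of x) (level_of y).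
Proof.
  intros E A. split; simpl; auto. intros z Hz. rewrite E in Hz.
  apply outer_comp_trans with y.
  - apply linked_adj; auto. lia.
  - eapply linked_mono; [|exact Hz]. simpl. intros. lia.
Qed.

Lemma level_walk_of_walk n x y : walk adj n x y ->
  exists n', n' <= n /\ walk level_adj n' (level_of x) (level_of y).
Proof.
  induction 1 as [x|n x y z A _ [n' [Hn' W]]].
  - exists 0. split; auto. constructor.
  - pose proof (dist_root_adj A). pose proof (dist_root_adj (adj_sym A)).
    destruct (lt_eq_lt_dec (dist adj o x) (dist adj o y)) as [[Hlt|Heq]|Hgt].
    + exists (S n'). split; [lia|]. apply walkS with (level_of y); auto.
      left. apply level_child_of; auto. lia.
    + exists n'. split; [lia|]. rewrite (level_of_eq Heq); auto. apply linked_adj; auto; lia.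
    + exists (S n'). split; [lia|]. apply walkS with (level_of y); auto.
      right. apply level_child_of; auto; lia.
Qed.

(* The neighbour of x one level closer to o lies on the sphere of y, in the outer component
   of y. *)
Lemma level_child_dist x y : level_child (level_of y) (level_of x) -> dist adj x y <= S K.
Proof.
  intros [E H]. simpl in E, H.
  destruct (dist_pred_neighbor adj_connected o x E) as [z [A Hz]].
  assert (Hyz : outer_comp (dist adj o y) y z).
  { apply outer_comp_trans with x.
    - apply H. apply outer_comp_refl. lia.
    - apply linked_adj; auto; lia. }
  pose proof (sphere_comp_bounded eq_refl Hz Hyz).
  pose proof (dist_adj adj_connected x z (adj_sym A)). pose proof (dist_tri adj_connected x z y).
  rewrite (dist_sym adj_sym adj_connected z y) in *. lia.
Qed.

Lemma level_adj_dist x y : level_adj (level_of x) (level_of y) -> dist adj x y <= S K.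
Proof.
  intros [H|H].
  - rewrite (dist_sym adj_sym adj_connected). apply level_child_dist. auto.
  - apply level_child_dist. auto.
Qed.

Lemma dist_le_of_level_walk n a b : walk level_adj n a b ->
  forall x y, a = level_of x -> b = level_of y -> dist adj x y <= K + n * S K.
Proof.
  induction 1 as [a|n a a' b A _ IH]; intros x y Ha Hb.
  - subst. destruct (level_of_inj Hb) as [E H].
    pose proof (sphere_comp_bounded eq_refl (eq_sym E) H). lia.
  - destruct (level_of_surj a') as [x' ->]. subst.
    pose proof (level_adj_dist A). specialize (IH x' y eq_refl eq_refl).
    pose proof (dist_tri adj_connected x x' y). simpl. lia.
Qed.

Lemma level_walk_to_root n x : dist adj o x = n -> walk level_adj n (level_of x) (level_of o).
Proof.
  revert x. induction n as [|n IH]; intros x Hx.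
  - apply (dist_eq0 adj_connected) in Hx. subst. constructor.
  - destruct (dist_pred_neighbor adj_connected o x Hx) as [y [A Hy]].
    apply walkS with (level_of y); auto. right. apply level_child_of; auto. lia.
Qed.

Lemma level_tree : is_tree level_adj.
Proof.
  split; [exact level_adj_sym|]. split; [intros a [[E _]|[E _]]; lia|]. split.
  - intros a b. destruct (level_of_surj a) as [x ->], (level_of_surj b) as [y ->].
    exists (dist adj o x + dist adj o y). apply walk_app with (level_of o).
    + apply level_walk_to_root. auto.
    + apply (walk_rev level_adj_sym). apply level_walk_to_root. auto.
  - apply unique_parent_no_cycle with (h := fun a => fst (proj1_sig a)); [exact level_adj_sym| |].
    + intros a b [[E _]|[E _]]; auto.
    + intros a b1 b2 A1 A2 L1 L2.
      destruct (level_of_surj a) as [x ->], (level_of_surj b1) as [y1 ->],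
        (level_of_surj b2) as [y2 ->].
      destruct A1 as [[E1 _]|[E1 H1]], A2 as [[E2 _]|[E2 H2]]; simpl in *; try lia.
      apply level_of_eq; [lia|]. apply outer_comp_trans with x.
      * apply H1, outer_comp_refl. lia.
      * replace (dist adj o y1) with (dist adj o y2) by lia.
        apply (linked_sym adj_sym). apply H2, outer_comp_refl. lia.
Qed.

Theorem level_tree_qi : qi_to_tree adj.
Proof.
  exists level_vertex, level_adj. split; [exact level_tree|].
  exists level_of, (S K), K. split.
  - intros x y dx dy Hx [Wy Hy]. split.
    + destruct (level_walk_of_walk (proj1 Hx)) as [n [Hn W]]. specialize (Hy _ W). nia.
    + rewrite (gdist_dist adj_connected Hx).
      pose proof (dist_le_of_level_walk Wy eq_refl eq_refl). nia.
  - intro w. destruct (level_of_surj w) as [x ->]. exists x, 0.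
    split; [split; [constructor | intros; lia] | lia].
Qed.

End LevelTree.

(** * Chordal implies quasi-isometric to a tree *)

Section Detour.
Context {V : Type} (adj : V -> V -> Prop).
Hypothesis adj_sym : forall x y, adj x y -> adj y x.
Hypothesis adj_connected : connected adj.
Variables (sg : nat -> V) (N : nat) (pi : nat -> V) (l s D t : nat).
Hypothesis sg_geodesic : geodesic adj sg N.
Hypotheses (s_lt_D : s < D) (D_lt_t : D < t) (t_le_N : t <= N).
Hypotheses (pi_path : is_path adj pi l) (pi_0 : pi 0 = sg t) (pi_l : pi l = sg s).
Hypothesis pi_inj : forall a b, a <= l -> b <= l -> pi a = pi b -> a = b.
Hypothesis pi_avoids : forall y v, y <= l -> s < v < t -> pi y <> sg v.

(* The cycle sg D, ..., sg t, then pi back to sg s, then sg s, ..., sg D. *)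
Definition detour : nat -> V :=
  path_cat (fun x => sg (D + x)) (t - D) (path_cat pi l (fun z => sg (s + z))).

Lemma detour_seam : sg (D + (t - D)) = path_cat pi l (fun z => sg (s + z)) 0.
Proof. rewrite path_cat_l by lia. rewrite pi_0. f_equal. lia. Qed.

Lemma detour_first x : x <= t - D -> detour x = sg (D + x).
Proof. intro H. unfold detour. rewrite path_cat_l; auto. Qed.

Lemma detour_middle x : t - D <= x <= t - D + l -> detour x = pi (x - (t - D)).
Proof.
  intro H. unfold detour. rewrite path_cat_r by (apply detour_seam || lia).
  rewrite path_cat_l by lia. reflexivity.
Qed.

Lemma detour_last x : t - D + l <= x -> detour x = sg (s + (x - (t - D + l))).
Proof.
  intro H. unfold detour. rewrite path_cat_r by (apply detour_seam || lia).
  rewrite path_cat_r by (rewrite ?pi_l; f_equal; lia). f_equal. lia.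
Qed.

Lemma detour_length_gt2 : 2 < t - D + l + (D - s).
Proof.
  destruct l as [|l']; [|lia].
  exfalso. rewrite pi_l in pi_0. apply (geodesic_inj adj_connected sg_geodesic) in pi_0; lia.
Qed.

Lemma detour_simple : simple_cycle adj detour (t - D + l + (D - s)).
Proof.
  pose proof detour_length_gt2. split; [|split; [|split; auto]].
  - unfold detour. rewrite <- Nat.add_assoc. apply is_path_cat; [| |apply detour_seam].
    + intros x Hx. replace (D + S x) with (S (D + x)) by lia. apply sg_geodesic. lia.
    + apply is_path_cat; [auto| |rewrite pi_l; f_equal; lia].
      intros x Hx. replace (s + S x) with (S (s + x)) by lia. apply sg_geodesic. lia.
  - rewrite detour_last, detour_first by lia. f_equal. lia.
  - intros a b Hab Hb E.
    assert (Hsg : forall u v, u <= N -> v <= N -> sg u = sg v -> u = v)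
      by (intros; eapply geodesic_inj; eauto).
    destruct (le_lt_dec a (t - D)); [|destruct (le_lt_dec (t - D + l) a)].
    + destruct (le_lt_dec b (t - D)); [|destruct (le_lt_dec (t - D + l) b)].
      * rewrite !detour_first in E by lia. apply Hsg in E; lia.
      * rewrite detour_first, detour_last in E by lia. apply Hsg in E; lia.
      * rewrite detour_first, detour_middle in E by lia. exfalso.
        destruct (Nat.eq_dec (D + a) t) as [Et|Et].
        -- rewrite Et, <- pi_0 in E. apply pi_inj in E; lia.
        -- apply (pi_avoids (y := b - (t - D)) (v := D + a)); [lia|lia|auto].
    + rewrite !detour_last in E by lia. apply Hsg in E; lia.
    + destruct (le_lt_dec (t - D + l) b).
      * rewrite detour_middle, detour_last in E by lia. exfalso.
        destruct (Nat.eq_dec (s + (b - (t - D + l))) s) as [Es|Es].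
        -- rewrite Es, <- pi_l in E. apply pi_inj in E; lia.
        -- apply (pi_avoids (y := a - (t - D)) (v := s + (b - (t - D + l)))); lia || auto.
      * rewrite !detour_middle in E by lia. apply pi_inj in E; lia.
Qed.

Lemma detour_chord_lands_on_pi i j r : 1 <= i -> i <= t - D -> i < j ->
  j <= t - D + l + (D - s) -> dist adj (detour (i - 1)) (detour j) <= r -> r <= j - i ->
  r + 2 + j <= t - D + l + (D - s) + i -> t - D < j < t - D + l.
Proof.
  intros Hi1 Hi2 Hij Hj Hd Hr1 Hr2. rewrite detour_first in Hd by lia.
  destruct (le_lt_dec j (t - D)); [|destruct (le_lt_dec (t - D + l) j)]; [exfalso..|lia].
  - rewrite detour_first, (geodesic_dist adj_connected sg_geodesic) in Hd; lia.
  - rewrite detour_last in Hd by lia.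
    rewrite (dist_sym adj_sym adj_connected), (geodesic_dist adj_connected sg_geodesic) in Hd; lia.
Qed.
End Detour.

Section Bottleneck.
Context {V : Type} (adj : V -> V -> Prop).
Hypothesis adj_sym : forall x y, adj x y -> adj y x.
Hypothesis adj_connected : connected adj.
Variables i0 k m : nat.
Hypothesis chords : cycle_chordal adj i0 k m.

(* sg s and sg t are the points of the geodesic nearest to sg D, on either side, that P joins
   to sg 0; a shortest path inside P from sg t back to sg s meets the geodesic nowhere in
   between. *)
Lemma detour_around P sg N D r : geodesic adj sg N -> D <= N -> linked adj P (sg 0) (sg N) ->
  (forall v, P v -> r < dist adj v (sg D)) ->
  exists s t pi l, r < D - s /\ r < t - D /\ t <= N /\
    is_path adj pi l /\ pi 0 = sg t /\ pi l = sg s /\ (forall y, y <= l -> P (pi y)) /\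
    (forall a b, a <= l -> b <= l -> pi a = pi b -> a = b) /\
    (forall y v, y <= l -> s < v < t -> pi y <> sg v).
Proof.
  intros Hsg HD HP Hfar.
  assert (Hsg_dist : forall a b, a <= b -> b <= N -> dist adj (sg a) (sg b) = b - a)
    by (intros; apply (geodesic_dist adj_connected Hsg); auto).
  set (Q := linked adj P (sg 0)).
  assert (HQ0 : Q (sg 0)) by (apply linked_refl, (linked_ends HP)).
  destruct (greatest_witness_upto (fun u => Q (sg u)) D HQ0) as [s [Hs [HQs Hsmax]]].
  destruct (least_witness (fun v => D <= v <= N /\ Q (sg v))) as [t [[Ht HQt] Htmin]];
    [exists N; split; [lia | exact HP]|].
  assert (Hlink : linked adj P (sg t) (sg s))
    by (apply linked_trans with (sg 0); [apply (linked_sym adj_sym)|]; auto).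
  destruct (linked_injective_path Hlink) as [pi [l [Hpi [Hpi0 [Hpil [HpiP Hinj]]]]]].
  exists s, t, pi, l. repeat split; auto; try lia.
  - pose proof (Hfar _ (proj2 (linked_ends HQs))) as Hd. rewrite Hsg_dist in Hd; lia.
  - pose proof (Hfar _ (proj2 (linked_ends HQt))) as Hd.
    rewrite (dist_sym adj_sym adj_connected), Hsg_dist in Hd; lia.
  - intros y v Hy Hv E.
    assert (HQv : Q (sg v)).
    { rewrite <- E. apply linked_trans with (sg t); auto.
      rewrite <- Hpi0. apply linked_subpath with l; auto; try lia. intros; apply HpiP; lia. }
    destruct (le_lt_dec v D).
    + apply (Hsmax v); auto. lia.
    + enough (t <= v) by lia. apply Htmin. split; [lia | auto].
Qed.

(* Otherwise the detour around the ball of radius i0 + m + k about sg D is a long simple cycle;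
   its chord from near sg D must end on the part inside P, which is too far away. *)
Lemma bottleneck P sg N D : geodesic adj sg N -> D <= N -> linked adj P (sg 0) (sg N) ->
  exists v, P v /\ dist adj v (sg D) <= i0 + m + k.
Proof.
  intros Hsg HD HP. apply NNPP. intro Hnear.
  assert (Hfar : forall v, P v -> i0 + m + k < dist adj v (sg D)).
  { intros v Hv. apply Nat.nle_gt. intro. apply Hnear. eauto. }
  destruct (detour_around Hsg HD HP Hfar)
    as [s [t [pi [l [Hs [Ht [HtN [Hpi [Hpi0 [Hpil [HpiP [Hinj Havoid]]]]]]]]]]]].
  assert (HsD : s < D) by lia. assert (HDt : D < t) by lia.
  destruct (chords (detour_simple adj_connected Hsg HsD HDt HtN Hpi Hpi0 Hpil Hinj Havoid)
              ltac:(lia))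
    as [i [j [r [Hi1 [Hi2 [Hij [Hjn [W [Hrm [Hr1 Hr2]]]]]]]]]].
  pose proof (dist_le adj_connected W) as Hd.
  assert (Hi : i <= t - D) by lia.
  destruct (detour_chord_lands_on_pi adj_sym adj_connected pi l Hsg HsD HDt HtN Hpi0 Hpil
              Hi1 Hi Hij Hjn Hd Hr1 Hr2).
  rewrite detour_first, (@detour_middle _ sg N pi l s D t HsD HDt HtN Hpi0) in Hd by lia.
  pose proof (Hfar _ (HpiP (j - (t - D)) ltac:(lia))) as Hpi_far.
  pose proof (dist_tri adj_connected (pi (j - (t - D))) (sg (D + (i - 1))) (sg D)) as Htri.
  rewrite (dist_sym adj_sym adj_connected (sg (D + (i - 1))) (sg D)),
    (geodesic_dist adj_connected Hsg) in Htri by lia.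
  rewrite (dist_sym adj_sym adj_connected) in Hd. lia.
Qed.

Lemma linked_via_root o x y n : dist adj o x = n -> dist adj o y = n ->
  linked adj (fun v => dist adj o v + dist adj x v <= n \/ dist adj o v + dist adj v y <= n) x y.
Proof.
  intros Hx Hy.
  destruct (geodesic_exists adj_connected x o) as [g1 [Hg1 [G10 G1n]]].
  destruct (geodesic_exists adj_connected o y) as [g2 [Hg2 [G20 G2n]]].
  rewrite (dist_sym adj_sym adj_connected), Hx in Hg1, G1n. rewrite Hy in Hg2, G2n.
  apply linked_trans with o.
  - rewrite <- G10, <- G1n.
    apply linked_subpath with n; [apply Hg1 | lia | lia |]. intros t Ht. left.
    rewrite (dist_sym adj_sym adj_connected (g1 n)), !(geodesic_dist adj_connected Hg1); lia.
  - rewrite <- G20, <- G2n.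
    apply linked_subpath with n; [apply Hg2 | lia | lia |]. intros t Ht. right.
    rewrite !(geodesic_dist adj_connected Hg2); lia.
Qed.

Lemma sphere_comp_diam o n x y : dist adj o x = n -> dist adj o y = n ->
  outer_comp adj o n x y -> dist adj x y <= 6 * (i0 + m + k) + 1.
Proof.
  intros Hx Hy Hxy.
  destruct (geodesic_exists adj_connected x y) as [sg [Hsg [S0 SN]]].
  set (N := dist adj x y) in *. set (D := N / 2).
  assert (HD : 2 * D <= N <= 2 * D + 1).
  { pose proof (Nat.div_mod N 2 ltac:(lia)) as HN. fold D in HN.
    pose proof (Nat.mod_upper_bound N 2 ltac:(lia)). lia. }
  destruct (bottleneck Hsg (D := D) ltac:(lia) (P := fun v => n <= dist adj o v))
    as [v1 [Hv1 Hd1]]; [rewrite S0, SN; exact Hxy|].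
  rewrite <- S0 in Hx. rewrite <- SN in Hy.
  destruct (bottleneck Hsg (D := D) ltac:(lia) (linked_via_root o (sg 0) (sg N) Hx Hy))
    as [v2 [Hv2 Hd2]].
  assert (Hx_mid : dist adj (sg 0) (sg D) = D) by (rewrite (geodesic_dist adj_connected Hsg); lia).
  assert (Hmid_y : dist adj (sg D) (sg N) = N - D)
    by (rewrite (geodesic_dist adj_connected Hsg); lia).
  pose proof (dist_tri adj_connected o v2 v1).
  pose proof (dist_tri adj_connected v2 (sg D) v1) as Hv12.
  rewrite (dist_sym adj_sym adj_connected (sg D) v1) in Hv12.
  destruct Hv2 as [Hv2|Hv2].
  - pose proof (dist_tri adj_connected (sg 0) v2 (sg D)). lia.
  - pose proof (dist_tri adj_connected (sg D) v2 (sg N)) as Htri.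
    rewrite (dist_sym adj_sym adj_connected (sg D) v2) in Htri. lia.
Qed.
End Bottleneck.

Theorem cycle_chordal_qi_tree (V : Type) (adj : V -> V -> Prop) (o : V) i0 k m :
  (forall x y, adj x y -> adj y x) -> connected adj -> cycle_chordal adj i0 k m ->
  qi_to_tree adj.
Proof.
  intros Hsym Hconn Hch.
  apply (level_tree_qi Hsym Hconn (o := o) (K := 6 * (i0 + m + k) + 1)).
  intros n x y Hx Hy. apply (sphere_comp_diam Hsym Hconn Hch Hx Hy).
Qed.

Theorem qi_tree_iff_cycle_chordal (V : Type) (adj : V -> V -> Prop) (o : V) :
  (forall x y, adj x y -> adj y x) -> connected adj ->
  qi_to_tree adj <-> exists i0 k m, cycle_chordal adj i0 k m.
Proof.
  intros Hsym Hconn. split.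
  - apply qi_tree_cycle_chordal. auto.
  - intros [i0 [k [m Hch]]]. apply (cycle_chordal_qi_tree o Hsym Hconn Hch).
Qed.

(** * Cayley graphs *)

Lemma firstn_add (A : Type) a b (l : list A) :
  firstn (a + b) l = firstn a l ++ firstn b (skipn a l).
Proof.
  revert l. induction a as [|a IH]; intros l; auto.
  destruct l; simpl; [destruct b; auto | rewrite IH; auto].
Qed.

Section Cayley.
Variables (G : Type) (mul : G -> G -> G) (inv : G -> G) (e : G).
Hypothesis grp : is_group mul inv e.
Variable S : list G.
Hypothesis gen : generates mul inv e S.

Let mulA : forall x y z, mul x (mul y z) = mul (mul x y) z := proj1 grp.
Let mul1g : forall x, mul e x = x := proj1 (proj2 grp).
Let mulg1 : forall x, mul x e = x := proj1 (proj2 (proj2 grp)).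
Let mulVg : forall x, mul (inv x) x = e := proj1 (proj2 (proj2 (proj2 grp))).
Let mulgV : forall x, mul x (inv x) = e := proj2 (proj2 (proj2 (proj2 grp))).

Lemma eq_mul_l_iff a b x : b = mul a x <-> x = mul (inv a) b.
Proof.
  split; intros ->.
  - rewrite mulA, mulVg, mul1g. auto.
  - rewrite mulA, mulgV, mul1g. auto.
Qed.

Lemma mul_cancel_l a x y : mul a x = mul a y -> x = y.
Proof. intro H. apply eq_mul_l_iff in H. rewrite mulA, mulVg, mul1g in H. auto. Qed.

Lemma inv_involutive x : inv (inv x) = x.
Proof. apply (mul_cancel_l (a := inv x)). rewrite mulgV, mulVg. auto. Qed.

Lemma inv_e : inv e = e.
Proof. rewrite <- (mulg1 (inv e)). apply mulVg. Qed.

Lemma inv_mul_eq_e a b : mul (inv a) b = e -> a = b.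
Proof. intro H. symmetry in H. apply eq_mul_l_iff in H. rewrite mulg1 in H. auto. Qed.

Let cay := cay_adj mul inv e S.
Let Sp := Spm inv e S.

Lemma Spm_inv s : Sp s -> Sp (inv s).
Proof.
  intros [Hs Hne]. split.
  - rewrite inv_involutive. tauto.
  - intro E. apply Hne. rewrite <- (inv_involutive s), E. apply inv_e.
Qed.

Lemma cay_sym x y : cay x y -> cay y x.
Proof.
  intros [s [Hs ->]]. exists (inv s). split; [apply Spm_inv; auto|].
  rewrite <- mulA, mulgV, mulg1. auto.
Qed.

Lemma wprod_app l1 l2 : wprod mul e (l1 ++ l2) = mul (wprod mul e l1) (wprod mul e l2).
Proof. induction l1 as [|a l1 IH]; simpl; [rewrite mul1g | rewrite IH, mulA]; auto. Qed.

Lemma walk_word n g h : walk cay n g h ->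
  exists w, Forall Sp w /\ length w = n /\ h = mul g (wprod mul e w).
Proof.
  induction 1 as [x|n x y z [s [Hs Hy]] _ [w [Hw [Hl Hz]]]].
  - exists []. simpl. rewrite mulg1. auto.
  - exists (s :: w). simpl. repeat split; auto. rewrite Hz, Hy, mulA. auto.
Qed.

Lemma word_walk w g : Forall Sp w -> walk cay (length w) g (mul g (wprod mul e w)).
Proof.
  intro Hw. revert g. induction Hw as [|s w Hs Hw IH]; intro g; simpl.
  - rewrite mulg1. constructor.
  - apply walkS with (mul g s); [exists s; auto|]. rewrite mulA. apply IH.
Qed.

Lemma cay_connected : connected cay.
Proof.
  intros g h. destruct (gen (mul (inv g) h)) as [w [Hw E]]. exists (length w).
  pose proof (word_walk g Hw) as W. rewrite E, mulA, mulgV, mul1g in W. auto.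
Qed.

(* pref w t is the vertex g_t = s_1 ... s_t reached after reading t letters of w from e. *)
Definition pref (w : list G) (t : nat) : G := wprod mul e (firstn t w).

Lemma pref_S w t : t < length w -> pref w (Datatypes.S t) = mul (pref w t) (nth t w e).
Proof.
  unfold pref. revert t. induction w as [|a w IH]; intros t Ht; simpl in *; [lia|].
  destruct t; simpl; [rewrite mul1g, mulg1; auto|]. rewrite IH by lia. apply mulA.
Qed.

Lemma wprod_seg w p q : 1 <= p -> p <= q ->
  wprod mul e (seg w p q) = mul (inv (pref w (p - 1))) (pref w q).
Proof.
  intros Hp Hpq. apply (proj1 (eq_mul_l_iff _ _ _)). unfold pref, seg.
  rewrite <- wprod_app, <- firstn_add. do 2 f_equal. lia.
Qed.

Lemma pref_path w : Forall Sp w -> is_path cay (pref w) (length w).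
Proof.
  intros Hw t Ht. exists (nth t w e). split; [|apply pref_S; auto].
  rewrite Forall_forall in Hw. apply Hw, nth_In. auto.
Qed.

Lemma simple_relation_cycle w : simple_relation mul inv e S w ->
  simple_cycle cay (pref w) (length w).
Proof.
  intros [Hn [Hw [He Hsimple]]]. split; [|split; [|split; [auto|]]].
  - apply pref_path. auto.
  - unfold pref. rewrite firstn_all. auto.
  - intros a b Hab Hb E.
    assert (Hseg : wprod mul e (seg w (Datatypes.S a) b) = e).
    { rewrite wprod_seg by lia. rewrite Nat.sub_succ, Nat.sub_0_r, E. apply mulVg. }
    apply Hsimple in Hseg; lia.
Qed.

Lemma cycle_relation c n : simple_cycle cay c n ->
  exists w, simple_relation mul inv e S w /\ length w = n /\
    forall p q, 1 <= p -> p <= q -> q <= n ->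
      wprod mul e (seg w p q) = mul (inv (c (p - 1))) (c q).
Proof.
  intros [Hc [Hclose [Hn Hsimple]]].
  set (w := map (fun t => mul (inv (c t)) (c (Datatypes.S t))) (seq 0 n)).
  assert (Hlen : length w = n) by (unfold w; rewrite length_map, length_seq; auto).
  assert (Hpref : forall t, t <= n -> pref w t = mul (inv (c 0)) (c t)).
  { induction t as [|t IH]; intros Ht; [symmetry; apply mulVg|].
    rewrite pref_S, IH by lia. unfold w.
    rewrite (nth_indep _ e (mul (inv (c 0)) (c 1))) by (rewrite length_map, length_seq; lia).
    rewrite (map_nth (fun t => mul (inv (c t)) (c (Datatypes.S t))) (seq 0 n) 0 t),
      seq_nth by lia.
    simpl. rewrite <- mulA, (mulA (c t)), mulgV, mul1g. auto. }
  assert (Hseg : forall p q, 1 <= p -> p <= q -> q <= n ->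
                 wprod mul e (seg w p q) = mul (inv (c (p - 1))) (c q)).
  { intros p q Hp Hpq Hq. rewrite wprod_seg by lia. symmetry.
    apply (proj1 (eq_mul_l_iff _ _ _)). rewrite !Hpref by lia.
    rewrite <- mulA, (mulA (c (p - 1))), mulgV, mul1g. auto. }
  exists w. split; [|split; auto]. split; [|split; [|split]].
  - lia.
  - apply Forall_forall. intros x Hx. unfold w in Hx.
    apply in_map_iff in Hx as [t [<- Ht]]. apply in_seq in Ht.
    destruct (Hc t ltac:(lia)) as [s [Hs E]]. apply eq_mul_l_iff in E. rewrite <- E. auto.
  - pose proof (Hpref n (le_n n)) as Hw. rewrite Hclose, mulVg in Hw.
    unfold pref in Hw. rewrite <- Hlen, firstn_all in Hw. auto.
  - rewrite Hlen. intros p q Hp Hpq Hq. rewrite Hseg by lia. split.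
    + intro E. apply inv_mul_eq_e, Hsimple in E; lia.
    + intros [-> ->]. rewrite Hclose. apply mulVg.
Qed.

Lemma chordal_iff_cycle_chordal i0 k m :
  chordal mul inv e S i0 k m <-> cycle_chordal cay i0 k m.
Proof.
  split.
  - intros Hch c n Hc Hk.
    destruct (cycle_relation Hc) as [w [Hw [Hlen Hseg]]].
    destruct (Hch w Hw ltac:(lia)) as [i [j [w' [Hi1 [Hi2 [Hij [Hj [Hw' [E [Hm [Hr1 Hr2]]]]]]]]]]].
    rewrite Hlen in *. exists i, j, (length w'). repeat split; auto.
    rewrite Hseg in E by lia. symmetry in E. apply eq_mul_l_iff in E. rewrite E.
    apply word_walk. auto.
  - intros Hch w Hw Hk.
    destruct (Hch _ _ (simple_relation_cycle Hw) Hk)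
      as [i [j [r [Hi1 [Hi2 [Hij [Hj [W [Hm [Hr1 Hr2]]]]]]]]]].
    destruct (walk_word W) as [w' [Hw' [Hl E]]].
    exists i, j, w'. subst r. repeat split; auto.
    rewrite wprod_seg by lia. apply eq_mul_l_iff in E. auto.
Qed.

End Cayley.

Theorem corollary2 (G : Type) (mul : G -> G -> G) (inv : G -> G) (e : G)
  (Hgrp : is_group mul inv e) (S : list G) (HS : generates mul inv e S) :
  qi_to_tree (cay_adj mul inv e S) <->
  exists i0 k m : nat, chordal mul inv e S i0 k m.
Proof.
  rewrite (qi_tree_iff_cycle_chordal e (cay_sym Hgrp (S := S)) (cay_connected Hgrp HS)).
  split; intros [i0 [k [m H]]]; exists i0, k, m; apply (chordal_iff_cycle_chordal Hgrp); auto.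
Qed.
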